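(* Let $X$ be a shift space over $\mathcal{A}$, $\sigma:\mathcal{A}^*\to\mathcal{B}^*$ an injective and strongly left proper morphism with first letter $\ell$, $Y$ the image of $X$ under $\sigma$, and $v\in\mathcal{L}(X)$ bispecial. If $(s,p)\in\mathcal{T}^-_v(\sigma)\times\mathcal{T}^+_v(\sigma)$ is such that $u=s\sigma(v)p$ is an extended image of $v$, then the extension graph $\mathcal{E}_Y(u)$ is the image of $\mathcal{E}_{X,s,p}(v)$ under the graph morphism $\varphi_{v,s,p}:\mathcal{E}_{X,s,p}(v)\to\mathcal{E}_Y(u)$ which, for every child $s'$ of $s$ in $\overline{\mathcal{T}^-_v(\sigma)}$, maps all left vertices belonging to $E^-_{X,s'}(v)$ to the left vertex labeled by the letter $a\in\mathcal{B}$ such that $s'\in\mathcal{B}^*as$, and, for every child $p'$ of $p$ in $\overline{\mathcal{T}^+_v(\sigma)}$, maps all right vertices belonging to $E^+_{X,p'}(v)$ to the right vertex labeled by the letter $b\in\mathcal{B}$ such that $p'\in pb\mathcal{B}^*$. In particular, if $\mathcal{T}^-_v(\sigma)=\{s_0\}$ and $\mathcal{T}^+_v(\sigma)=\{p_0\}$, then $v$ has a unique bispecial extended image $u$ and the associated morphism $\varphi_{v,s_0,p_0}$ is an isomorphism.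
   Context: A shift space over $\mathcal{A}$ is a closed shift-invariant $X\subseteq\mathcal{A}^{\mathbb{Z}}$ in which all letters occur, with factor set $\mathcal{L}(X)$. For $w\in\mathcal{L}(X)$: $E^-_X(w)=\{a:aw\in\mathcal{L}(X)\}$, $E^+_X(w)=\{b:wb\in\mathcal{L}(X)\}$, $E_X(w)=\{(a,b):awb\in\mathcal{L}(X)\}$; the extension graph $\mathcal{E}_X(w)$ is the bipartite graph on left vertices $E^-_X(w)$ and right vertices $E^+_X(w)$ with edge set $E_X(w)$; $w$ is bispecial if both $E^\pm_X(w)$ have at least two elements. Morphisms are non-erasing; $\sigma$ is strongly left proper with first letter $\ell$ if every $\sigma(a)$ begins with $\ell$ and contains $\ell$ exactly once. The image of $X$ under $\sigma$ is $Y=\{S^k\sigma(x):x\in X,0\le k<|\sigma(x_0)|\}$. Fact (antecedents): for every non-empty $u\in\mathcal{L}(Y)$ containing $\ell$ there is a unique triple $(s,v,p)$, $v\in\mathcal{L}(X)$, $u=s\sigma(v)p$, such that for some $(a,b)\in E_X(v)$, $s$ is a proper suffix of $\sigma(a)$ and $p$ a non-empty prefix of $\sigma(b)$; then $u$ is an extended image of $v$. Notation: $s(a_1,a_2)$, $p(b_1,b_2)$ are the longest common suffix of $\sigma(a_1),\sigma(a_2)$ and longest common prefix of $\sigma(b_1),\sigma(b_2)$. $\mathcal{T}^-_v(\sigma)=\{s(a_1,a_2):a_1\ne a_2\in E^-_X(v)\}$, $\mathcal{T}^+_v(\sigma)=\{p(b_1,b_2):b_1\ne b_2\in E^+_X(v)\}$,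 $\overline{\mathcal{T}^-_v(\sigma)}=\mathcal{T}^-_v(\sigma)\cup\sigma(E^-_X(v))$, $\overline{\mathcal{T}^+_v(\sigma)}=\mathcal{T}^+_v(\sigma)\cup\sigma(E^+_X(v))\ell$. The suffix order (resp. prefix order) makes $\overline{\mathcal{T}^-_v(\sigma)}$ (resp. $\overline{\mathcal{T}^+_v(\sigma)}$) a rooted tree whose root $s_0$ (resp. $p_0$) is its shortest word; a child of a node $s$ is an element $s'$ having $s$ as a proper suffix with no element strictly in between (similarly with prefixes). For words $x,y$: $E^-_{X,x}(v)=\{a\in E^-_X(v):\sigma(a)\in\mathcal{B}^*x\}$, $E^+_{X,y}(v)=\{b\in E^+_X(v):\sigma(b)\ell\in y\mathcal{B}^*\}$, $E_{X,x,y}(v)=E_X(v)\cap(E^-_{X,x}(v)\times E^+_{X,y}(v))$, and $\mathcal{E}_{X,x,y}(v)$ is the subgraph of $\mathcal{E}_X(v)$ with edge set $E_{X,x,y}(v)$ and vertices those incident to these edges. *)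

From mathcomp Require Import all_boot all_order all_algebra.
Set Implicit Arguments. Unset Strict Implicit. Unset Printing Implicit Defensive.
Import GRing.Theory Num.Theory.

Definition window (T : Type) (x : int -> T) (i : int) (n : nat) : seq T :=
  [seq x (i + k%:Z)%R | k <- iota 0 n].

Definition factor_of (T : Type) (w : seq T) (x : int -> T) : Prop :=
  exists i : int, w = window x i (size w).

Definition shiftS (T : Type) (x : int -> T) : int -> T := fun i => x (i + 1)%R.

Definition lang (T : Type) (X : (int -> T) -> Prop) (w : seq T) : Prop :=
  exists x, X x /\ factor_of w x.

(* closed (product topology), shift-invariant (S(X) = X), all letters occur *)
Definition shift_space (T : finType) (X : (int -> T) -> Prop) : Prop :=
  [/\ (forall x, X x -> X (shiftS x)),
      (forall x, X x -> exists y, X y /\ shiftS y = x),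
      (forall x, (forall n : nat, exists y, X y /\
            window y (- n%:Z)%R n.*2.+1 = window x (- n%:Z)%R n.*2.+1) -> X x)
    & (forall a : T, lang X [:: a])].

Definition morph (A B : Type) (sigma : A -> seq B) (w : seq A) : seq B :=
  flatten (map sigma w).

Definition strongly_left_proper (A : Type) (B : eqType) (sigma : A -> seq B) (l : B) :=
  forall a, (exists t, sigma a = l :: t) /\ count_mem l (sigma a) = 1%N.

(* Y = { S^k sigma(x) : x in X, 0 <= k < |sigma(x_0)| }, where sigma(x) is the
   bi-infinite word ... sigma(x_{-1}) . sigma(x_0) sigma(x_1) ... with sigma(x_0)
   starting at position 0.  y = S^k sigma(x) is characterised by: for every n, the
   image sigma(x_{-n} ... x_n) occurs in y at position -k - |sigma(x_{-n}...x_{-1})|. *)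
Definition imageY (A B : Type) (X : (int -> A) -> Prop) (sigma : A -> seq B)
  (y : int -> B) : Prop :=
  exists x, X x /\ exists k : nat, (k < size (sigma (x 0%R)))%N /\
    forall n : nat,
      window y (- (k + size (morph sigma (window x (- n%:Z)%R n)))%:Z)%R
               (size (morph sigma (window x (- n%:Z)%R n.*2.+1)))
      = morph sigma (window x (- n%:Z)%R n.*2.+1).

Definition Em (T : Type) (X : (int -> T) -> Prop) (w : seq T) (a : T) := lang X (a :: w).
Definition Ep (T : Type) (X : (int -> T) -> Prop) (w : seq T) (b : T) := lang X (rcons w b).
Definition Eext (T : Type) (X : (int -> T) -> Prop) (w : seq T) (a b : T) :=
  lang X (a :: rcons w b).

Definition bispecial (T : eqType) (X : (int -> T) -> Prop) (w : seq T) : Prop :=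
  [/\ lang X w,
      (exists a1 a2, a1 != a2 /\ Em X w a1 /\ Em X w a2)
    & (exists b1 b2, b1 != b2 /\ Ep X w b1 /\ Ep X w b2)].

Fixpoint lcp (T : eqType) (s t : seq T) : seq T :=
  match s, t with
  | x :: s', y :: t' => if x == y then x :: lcp s' t' else [::]
  | _, _ => [::]
  end.

Definition lcs (T : eqType) (s t : seq T) : seq T := rev (lcp (rev s) (rev t)).

Definition proper_suffix (T : eqType) (s t : seq T) := suffix s t && (s != t).
Definition proper_prefix (T : eqType) (s t : seq T) := prefix s t && (s != t).

Section Trees.
Variables (A B : finType) (X : (int -> A) -> Prop) (sigma : A -> seq B) (l : B)
          (v : seq A).

Definition Tm (s : seq B) : Prop :=
  exists a1 a2, a1 != a2 /\ Em X v a1 /\ Em X v a2 /\ s = lcs (sigma a1) (sigma a2).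
Definition Tp (p : seq B) : Prop :=
  exists b1 b2, b1 != b2 /\ Ep X v b1 /\ Ep X v b2 /\ p = lcp (sigma b1) (sigma b2).

Definition Tbm (s : seq B) : Prop := Tm s \/ exists a, Em X v a /\ s = sigma a.
Definition Tbp (p : seq B) : Prop := Tp p \/ exists b, Ep X v b /\ p = rcons (sigma b) l.

Definition child_m (s s' : seq B) : Prop :=
  [/\ Tbm s', proper_suffix s s' &
      ~ exists t, [/\ Tbm t, proper_suffix s t & proper_suffix t s']].
Definition child_p (p p' : seq B) : Prop :=
  [/\ Tbp p', proper_prefix p p' &
      ~ exists t, [/\ Tbp t, proper_prefix p t & proper_prefix t p']].

Definition Emx (x : seq B) (a : A) : Prop := Em X v a /\ suffix x (sigma a).
Definition Epy (y : seq B) (b : A) : Prop := Ep X v b /\ prefix y (rcons (sigma b) l).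
Definition Exy (x y : seq B) (a b : A) : Prop := [/\ Eext X v a b, Emx x a & Epy y b].
Definition leftV (x y : seq B) (a : A) : Prop := exists b, Exy x y a b.
Definition rightV (x y : seq B) (b : A) : Prop := exists a, Exy x y a b.

Definition is_ext_image (s p : seq B) : Prop :=
  exists a b, [/\ Eext X v a b, proper_suffix s (sigma a), p != [::] & prefix p (sigma b)].

Definition ext_image_of (u : seq B) : Prop :=
  lang (imageY X sigma) u /\
  exists s p, is_ext_image s p /\ u = s ++ morph sigma v ++ p.

(* phiL/phiR is (a well-defined realisation of) the map phi_{v,s,p}: every vertex of
   E_{X,s,p}(v) lies in E^-_{X,s'}(v) (resp. E^+_{X,p'}(v)) for a child s' of s
   (resp. p' of p), and is sent to the letter c with s' in B^* c s
   (resp. d with p' in p d B^* ). *)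
Definition phi_spec (s p : seq B) (phiL phiR : A -> B) : Prop :=
  [/\ (forall a, leftV s p a -> exists s', child_m s s' /\ Emx s' a),
      (forall s' a, child_m s s' -> Emx s' a -> leftV s p a -> suffix (phiL a :: s) s'),
      (forall b, rightV s p b -> exists p', child_p p p' /\ Epy p' b)
    & (forall p' b, child_p p p' -> Epy p' b -> rightV s p b ->
         prefix (rcons p (phiR b)) p')].

Definition image_graph (s p : seq B) (phiL phiR : A -> B) (u : seq B) : Prop :=
  [/\ (forall c, Em (imageY X sigma) u c <-> exists a, leftV s p a /\ phiL a = c),
      (forall d, Ep (imageY X sigma) u d <-> exists b, rightV s p b /\ phiR b = d)
    & (forall c d, Eext (imageY X sigma) u c d <->
         exists a b, [/\ Exy s p a b, phiL a = c & phiR b = d])].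

Definition graph_iso (s p : seq B) (phiL phiR : A -> B) (u : seq B) : Prop :=
  [/\ image_graph s p phiL phiR u,
      (forall a1 a2, leftV s p a1 -> leftV s p a2 -> phiL a1 = phiL a2 -> a1 = a2),
      (forall b1 b2, rightV s p b1 -> rightV s p b2 -> phiR b1 = phiR b2 -> b1 = b2)
    & (forall a b, leftV s p a -> rightV s p b ->
         Eext (imageY X sigma) u (phiL a) (phiR b) -> Exy s p a b)].

End Trees.

(* The letter l marks, in any image sigma(z), exactly the starting positions of the
   blocks sigma(a).  Since sigma is injective, a factor c s sigma(v) l q d of Y with
   l not in s, q can therefore be cut back into blocks: it comes from a factor a v b of
   X such that c s is a suffix of sigma(a) and l q d a prefix of sigma(b) l.
   Conversely sigma(a v b e) is a factor of Y for every such a v b.  Hence the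
   extensions of u = s sigma(v) p are the images of those of v under
   a |-> (letter of sigma(a) before s), b |-> (letter of sigma(b) l after p), a map
   which is constant on the vertices attached to each child of s and of p.
   If T^- = {s0} and T^+ = {p0}, two distinct left (right) extensions of v branch
   exactly at s0 (p0), so this map is injective; and two distinct left (right)
   extensions of an extended image s sigma(v) p exhibit s (p) as a longest common
   suffix (prefix) of two images, i.e. s = s0 and p = p0. *)

From mathcomp Require Import all_boot all_order all_algebra zify.
From Stdlib Require Import Classical.
Set Implicit Arguments. Unset Strict Implicit. Unset Printing Implicit Defensive.
Import GRing.Theory.

Section Words.
Variable T : eqType.
Implicit Types (c d : T) (r s t w x y : seq T).

Lemma lcp_prefixl x y : prefix (lcp x y) x.
Proof. by elim: x y => [|c x IH] [|d y] //=; case: eqP => [->|] //=; rewrite eqxx IH. Qed.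

Lemma lcp_prefixr x y : prefix (lcp x y) y.
Proof. by elim: x y => [|c x IH] [|d y] //=; case: eqP => [->|] //=; rewrite eqxx IH. Qed.

Lemma prefix_lcp t x y : prefix t x -> prefix t y -> prefix t (lcp x y).
Proof.
elim: t x y => [|c t IH] [|d x] [|e y] //=; rewrite ?prefix0s //.
by move=> /andP[/eqP <- Hx] /andP[/eqP <- Hy]; rewrite eqxx /= eqxx IH.
Qed.

Lemma lcp_cat_neq t c d x y : c != d -> lcp (t ++ c :: x) (t ++ d :: y) = t.
Proof. by move=> /negbTE cd; elim: t => [|e t IH] /=; rewrite ?cd // eqxx IH. Qed.

Lemma lcs_suffixl x y : suffix (lcs x y) x.
Proof. by rewrite /suffix /lcs revK lcp_prefixl. Qed.

Lemma lcs_suffixr x y : suffix (lcs x y) y.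
Proof. by rewrite /suffix /lcs revK lcp_prefixr. Qed.

Lemma suffix_lcs t x y : suffix t x -> suffix t y -> suffix t (lcs x y).
Proof. by rewrite /suffix /lcs revK; apply: prefix_lcp. Qed.

Lemma lcs_cat_neq t c d x y : c != d -> lcs (x ++ c :: t) (y ++ d :: t) = t.
Proof. by move=> cd; rewrite /lcs !rev_cat !rev_cons -!cats1 -!catA lcp_cat_neq ?revK. Qed.

Lemma prefix_of_shorter s t x :
  prefix s x -> prefix t x -> size s <= size t -> prefix s t.
Proof. by rewrite !prefixE => /eqP Es /eqP Et st; rewrite -Et take_takel // Es. Qed.

Lemma suffix_of_shorter s t x :
  suffix s x -> suffix t x -> size s <= size t -> suffix s t.
Proof. by rewrite /suffix => Hs Ht st; apply: prefix_of_shorter Hs Ht _; rewrite !size_rev. Qed.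

Lemma prefix_size_eq x y : prefix x y -> size x = size y -> x = y.
Proof. by rewrite prefixE => /eqP Ex Exy; rewrite -Ex Exy take_size. Qed.

Lemma suffix_size_eq x y : suffix x y -> size x = size y -> x = y.
Proof. by rewrite suffixE => /eqP Ex Exy; rewrite -Ex Exy subnn drop0. Qed.

Lemma proper_prefixP s t : proper_prefix s t -> exists c r, t = s ++ c :: r.
Proof.
case/andP => /prefixP [[|c r] ->]; first by rewrite cats0 eqxx.
by exists c, r.
Qed.

Lemma proper_suffixP s t : proper_suffix s t -> exists r c, t = r ++ c :: s.
Proof.
case/andP => /suffixP [r0 ->]; case/lastP: r0 => [|r c]; first by rewrite eqxx.
by exists r, c; rewrite cat_rcons.
Qed.

Lemma proper_prefix_size s t : proper_prefix s t -> size s < size t.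
Proof. by case/proper_prefixP => c [r ->]; rewrite size_cat addnS ltnS leq_addr. Qed.

Lemma proper_suffix_size s t : proper_suffix s t -> size s < size t.
Proof. by case/proper_suffixP => r [c ->]; rewrite size_cat /= addnS ltnS leq_addl. Qed.

Lemma prefix_notin_split c x y w r :
  c \notin y -> x ++ c :: w = y ++ r -> exists y', x = y ++ y'.
Proof.
elim: y x => [|d y IH] x; first by exists x.
rewrite inE negb_or => /andP[cd cy]; case: x => [|e x] [Ed E]; first by rewrite Ed eqxx in cd.
by have [y' ->] := IH x cy E; exists y'; rewrite Ed.
Qed.

Lemma prefix_rcons_inj c d p t : prefix (rcons p c) t -> prefix (rcons p d) t -> c = d.
Proof.
move=> Hc Hd; have cd : size (rcons p c) = size (rcons p d) by rewrite !size_rcons.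
by have /rcons_inj [] := prefix_size_eq (prefix_of_shorter Hc Hd (eq_leq cd)) cd.
Qed.

Lemma suffix_cons_inj c d s t : suffix (c :: s) t -> suffix (d :: s) t -> c = d.
Proof.
by move=> Hc Hd; have /suffix_size_eq /(_ erefl) [] := suffix_of_shorter Hc Hd (leqnn _).
Qed.

Lemma lcp_rcons_notin c x y :
  c \notin x -> c \notin y -> x != y -> lcp (rcons x c) (rcons y c) = lcp x y.
Proof.
elim: x y => [|d x IH] [|e y] //=; rewrite ?inE ?negb_or.
- by move=> _ /andP[/negbTE ->].
- by move=> /andP[]; rewrite eq_sym => /negbTE ->.
move=> /andP[_ cx] /andP[_ cy]; rewrite eqseq_cons; case: eqP => //= _ xy.
by rewrite IH.
Qed.

(* If [x] were longer than [y], it would contain the [c] that follows [y]. *)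
Lemma prefix_upto_notin c d x y w :
  c \notin x -> prefix (rcons x d) (y ++ c :: w) -> prefix (rcons x d) (rcons y c).
Proof.
have ycw : prefix (rcons y c) (y ++ c :: w) by apply/prefixP; exists w; rewrite cat_rcons.
move=> cx Hp; have [yx|xy] := ltnP (size y) (size x).
  have /prefixP [x' Ex] : prefix (rcons y c) x.
    by apply: prefix_of_shorter ycw (prefix_trans (prefix_rcons x d) Hp) _; rewrite size_rcons.
  by rewrite Ex mem_cat mem_rcons mem_head in cx.
by apply: prefix_of_shorter Hp ycw _; rewrite !size_rcons.
Qed.

Lemma suffix_from_notin c d x y w :
  c \notin x -> suffix (d :: x) (w ++ c :: y) -> suffix (d :: x) (c :: y).
Proof.
move=> cx; rewrite /suffix rev_cat !rev_cons cat_rcons.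
by apply: prefix_upto_notin; rewrite mem_rev.
Qed.

Lemma ex_minimal_size (P : seq T -> Prop) :
  (exists t, P t) -> exists t, P t /\ forall t', P t' -> size t <= size t'.
Proof.
case=> t0 Pt0; have [n] := ubnP (size t0); elim: n t0 Pt0 => // n IH t Pt tn.
have [[t' [Pt' lt]]|nomin] := classic (exists t', P t' /\ size t' < size t).
  by apply: IH Pt' _; apply: leq_trans lt _.
exists t; split=> // t' Pt'; rewrite leqNgt; apply/negP => lt; apply: nomin.
by exists t'.
Qed.

End Words.

Section Windows.
Variable T : Type.
Local Open Scope ring_scope.
Implicit Types (x : int -> T) (i : int) (m n : nat).

Lemma size_window x i n : size (window x i n) = n.
Proof. by rewrite size_map size_iota. Qed.

Lemma window_cat x i m n : window x i (m + n) = window x i m ++ window x (i + m%:Z) n.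
Proof.
rewrite /window iotaD map_cat add0n -[in iota m n](addn0 m) iotaDl -map_comp.
by congr (_ ++ _); apply: eq_map => k /=; rewrite PoszD addrA.
Qed.

Lemma window1 x i : window x i 1 = [:: x i].
Proof. by rewrite /window /= addr0. Qed.

Lemma window_cons x i n : window x i n.+1 = x i :: window x (i + 1) n.
Proof. by rewrite -add1n window_cat window1. Qed.

Lemma window_rcons x i n : window x i n.+1 = rcons (window x i n) (x (i + n%:Z)).
Proof. by rewrite -addn1 window_cat window1 cats1. Qed.

Lemma window_infix x i (w1 w2 w3 : seq T) :
  window x i (size (w1 ++ w2 ++ w3)) = w1 ++ w2 ++ w3 ->
  window x (i + (size w1)%:Z) (size w2) = w2.
Proof.
rewrite !size_cat !window_cat => /(congr1 (take (size w2) \o drop (size w1))) /=.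
by rewrite !drop_size_cat ?size_window // !take_size_cat ?size_window.
Qed.

End Windows.

Section Language.
Variables (T : Type) (X : (int -> T) -> Prop).
Local Open Scope ring_scope.

Lemma lang_infix (w1 w w2 : seq T) : lang X (w1 ++ w ++ w2) -> lang X w.
Proof.
case=> x [Xx [i E]]; exists x; split=> //; exists (i + (size w1)%:Z).
by rewrite (window_infix (esym E)).
Qed.

Lemma lang_extL (w : seq T) : lang X w -> exists a, lang X (a :: w).
Proof.
case=> x [Xx [i E]]; exists (x (i - 1)), x; split=> //; exists (i - 1).
by rewrite /= window_cons subrK -E.
Qed.

Lemma lang_extR (w : seq T) : lang X w -> exists b, lang X (rcons w b).
Proof.
case=> x [Xx [i E]]; exists (x (i + (size w)%:Z)), x; split=> //; exists i.
by rewrite size_rcons window_rcons -E.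
Qed.

Lemma Eext_Em (w : seq T) a b : Eext X w a b -> Em X w a.
Proof. by move=> H; apply: (@lang_infix [::] _ [:: b]); rewrite /= cats1. Qed.

Lemma Eext_Ep (w : seq T) a b : Eext X w a b -> Ep X w b.
Proof. by move=> H; apply: (@lang_infix [:: a] _ [::]); rewrite /= cats0. Qed.

End Language.

Section Shift.
Variables (A : finType) (X : (int -> A) -> Prop).
Hypothesis HX : shift_space X.
Local Open Scope ring_scope.

Lemma shift_space_shiftn x n :
  X x -> exists x', X x' /\ forall t, x' t = x (t + n%:Z).
Proof.
move=> Xx; elim: n => [|n [x' [Xx' Ex']]]; first by exists x; split=> // t; rewrite addr0.
exists (shiftS x'); split; first by case: HX => shiftX _ _ _; apply: shiftX.
by move=> t; rewrite /shiftS Ex'; congr x; lia.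
Qed.

Lemma shift_space_unshiftn x n :
  X x -> exists x', X x' /\ forall t, x' t = x (t - n%:Z).
Proof.
move=> Xx; elim: n => [|n [x' [Xx' Ex']]]; first by exists x; split=> // t; rewrite subr0.
case: HX => _ onto _ _; have [y [Xy Ey]] := onto _ Xx'.
exists y; split=> // t; rewrite -[t](subrK 1) -[y _]/(shiftS y (t - 1)) Ey Ex'.
by congr x; lia.
Qed.

Lemma shift_space_shift x i :
  X x -> exists x', X x' /\ forall t, x' t = x (t + i).
Proof.
case: i => n Xx; first exact: shift_space_shiftn.
by have [x' [Xx' Ex']] := shift_space_unshiftn n.+1 Xx; exists x'.
Qed.

End Shift.

Section Morphism.
Variables (A B : finType) (sigma : A -> seq B) (l : B).
Hypothesis Hslp : strongly_left_proper sigma l.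
Local Notation mo := (morph sigma).
Implicit Types (a b : A) (w z : seq A).

Lemma morph_cons a w : mo (a :: w) = sigma a ++ mo w.
Proof. by []. Qed.

Lemma morph_cat w z : mo (w ++ z) = mo w ++ mo z.
Proof. by rewrite /morph map_cat flatten_cat. Qed.

Lemma morph1 a : mo [:: a] = sigma a.
Proof. by rewrite /morph /= cats0. Qed.

Lemma morph_rcons w a : mo (rcons w a) = mo w ++ sigma a.
Proof. by rewrite -cats1 morph_cat morph1. Qed.

Lemma image_shape a : exists t, sigma a = l :: t /\ l \notin t.
Proof.
have [[t Ea] count1] := Hslp a; exists t; split=> //; apply/count_memPn.
by move: count1; rewrite Ea /= eqxx add1n => -[].
Qed.

Lemma mem_image_first a : l \in sigma a.
Proof. by have [t [-> _]] := image_shape a; rewrite mem_head. Qed.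

Lemma size_morph w : size w <= size (mo w).
Proof.
elim: w => //= a w IH; have [t [Ea _]] := image_shape a.
by rewrite size_cat Ea /= addSn ltnS (leq_trans IH) ?leq_addl.
Qed.

Lemma morph_cat_head w t : exists r, mo w ++ l :: t = l :: r.
Proof.
case: w => [|a w]; first by exists t.
by have [ta [Ea _]] := image_shape a; rewrite morph_cons Ea; eexists.
Qed.

(* Every occurrence of [l] in [mo z] marks the start of the image of a letter. *)
Lemma morph_cut z p r : mo z = p ++ l :: r ->
  exists z1 z2, [/\ z = z1 ++ z2, mo z1 = p & mo z2 = l :: r].
Proof.
elim: z p => [|a z IH] p; first by case: p.
case: p => [|c p] E; first by exists [::], (a :: z).
have [ta [Ea lta]] := image_shape a; move: E; rewrite morph_cons Ea /= => -[<- E].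
have [p' Ep] := prefix_notin_split lta (esym E).
move: E; rewrite Ep -catA => /eqP; rewrite eqseq_cat // => /andP[_ /eqP E].
have [z1 [z2 [-> E1 E2]]] := IH _ E.
by exists (a :: z1), z2; rewrite morph_cons Ea E1.
Qed.

Hypothesis Hinj : injective mo.

Lemma image_inj : injective sigma.
Proof. by move=> a b E; have [] : [:: a] = [:: b] by apply: Hinj; rewrite !morph1. Qed.

Lemma morph_synchronize z v p r : mo z = p ++ mo v ++ l :: r ->
  exists z1 z2, [/\ z = z1 ++ v ++ z2, mo z1 = p & mo z2 = l :: r].
Proof.
have [r' Er'] := morph_cat_head v r; rewrite Er' => /morph_cut [z1 [z' [-> E1 E']]].
move: E'; rewrite -Er' => /morph_cut [z3 [z2 [-> /Hinj -> E2]]].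
by exists z1, z2.
Qed.

End Morphism.

Section ImagePoints.
Variables (A B : finType) (X : (int -> A) -> Prop) (sigma : A -> seq B) (l : B).
Hypothesis Hslp : strongly_left_proper sigma l.
Local Notation mo := (morph sigma).
Implicit Types (x : int -> A) (M N : nat) (j : int).

Definition central x M := mo (window x (- M%:Z)%R M.*2.+1).
Definition offset x M := size (mo (window x (- M%:Z)%R M)).
Definition in_central x M j :=
  (0 <= (offset x M)%:Z + j)%R && ((offset x M)%:Z + j < (size (central x M))%:Z)%R.
Definition central_at x M j := nth l (central x M) (absz ((offset x M)%:Z + j)%R).

(* The point sigma(x) of Y with sigma(x_0) starting at position 0; its letter at [j]
   is read off the block sigma(x_{-|j|} ... x_{|j|}), which already covers [j]. *)
Definition image_point x j := central_at x (absz j) j.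

Lemma centralS x M :
  central x M.+1 = sigma (x (- M.+1%:Z)%R) ++ central x M ++ sigma (x M.+1%:Z%R).
Proof.
rewrite /central (_ : M.+1.*2.+1 = 1 + M.*2.+1 + 1)%N; last by rewrite doubleS add1n addn1.
rewrite !window_cat !morph_cat !window1 !morph1 -catA.
by congr (sigma (x _) ++ mo (window x _ _) ++ sigma (x _)); lia.
Qed.

Lemma offsetS x M : offset x M.+1 = (size (sigma (x (- M.+1%:Z)%R)) + offset x M)%N.
Proof.
rewrite /offset window_cons morph_cons size_cat.
by congr (_ + size (mo (window x _ _)))%N; lia.
Qed.

Lemma size_central x M : size (central x M) = (offset x M + size (mo (window x 0 M.+1)))%N.
Proof.
rewrite /central /offset (_ : M.*2.+1 = M + M.+1)%N; last lia.
by rewrite window_cat morph_cat size_cat; congr (_ + size (mo (window x _ _)))%N; lia.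
Qed.

Lemma offset_ge x M : (M <= offset x M)%N.
Proof. by have := size_morph Hslp (window x (- M%:Z)%R M); rewrite size_window. Qed.

Lemma size_morph_window_ge x M :
  (size (sigma (x 0%R)) + M <= size (mo (window x 0 M.+1)))%N.
Proof.
rewrite window_cons morph_cons size_cat leq_add2l.
by have := size_morph Hslp (window x (0 + 1)%R M); rewrite size_window.
Qed.

Lemma in_centralS x M j :
  in_central x M j -> in_central x M.+1 j /\ central_at x M.+1 j = central_at x M j.
Proof.
rewrite /in_central /central_at centralS offsetS.
move: (central x M) (offset x M) (sigma (x (- M.+1%:Z)%R)) (sigma (x M.+1%:Z%R)) => F O e f.
rewrite !size_cat => /andP [H1 H2]; split; first by apply/andP; split; lia.
rewrite (_ : absz ((size e + O)%N%:Z + j)%R = size e + absz (O%:Z + j)%R)%N; last lia.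
by rewrite nth_cat ltnNge leq_addr /= addKn nth_cat ifT //; lia.
Qed.

Lemma central_at_stable x M N j :
  in_central x M j -> in_central x N j -> central_at x M j = central_at x N j.
Proof.
have grow K d : in_central x K j ->
    in_central x (K + d) j /\ central_at x (K + d) j = central_at x K j.
  move=> HK; elim: d => [|d [Hd <-]]; first by rewrite addn0.
  by rewrite addnS; apply: in_centralS.
move=> HM HN; have [MN|NM] := leqP M N.
  by rewrite -(subnKC MN) (grow _ _ HM).2.
by rewrite -(subnKC (ltnW NM)) (grow _ _ HN).2.
Qed.

Lemma in_central_abs x j : in_central x (absz j) j.
Proof.
have := offset_ge x (absz j); have := size_morph_window_ge x (absz j).
have := size_central x (absz j); have [t [-> _]] := image_shape Hslp (x 0%R).
by rewrite /in_central /= => *; apply/andP; split; lia.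
Qed.

Lemma window_image_point x M :
  window (image_point x) (- (offset x M)%:Z)%R (size (central x M)) = central x M.
Proof.
apply: (@eq_from_nth _ l); first by rewrite size_window.
move=> k; rewrite size_window => Hk.
rewrite /window (nth_map 0%N) ?size_iota // nth_iota // add0n /image_point.
have Hin : in_central x M (- (offset x M)%:Z + k%:Z)%R by apply/andP; split; lia.
by rewrite (central_at_stable (in_central_abs _ _) Hin) /central_at; congr nth; lia.
Qed.

Lemma imageY_image_point x : X x -> imageY X sigma (image_point x).
Proof.
move=> Xx; exists x; split=> //; exists 0%N; split.
  by have [t [-> _]] := image_shape Hslp (x 0%R).
exact: window_image_point.
Qed.

Lemma lang_image_preimage w : lang (imageY X sigma) w ->
  exists z p q, lang X z /\ mo z = p ++ w ++ q.
Proof.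
case=> y [[x [Xx [k [Hk Wy]]]] [i Ew]].
set n := (absz i + size w)%N; set F := central x n; set d := absz (i + (k + offset x n)%:Z)%R.
have ge1 := offset_ge x n; have ge2 := size_morph_window_ge x n.
have := size_central x n; rewrite -/F => sF.
have eF : F = take d F ++ take (size w) (drop d F) ++ drop (size w) (drop d F).
  by rewrite !cat_take_drop.
have W : window y (- (k + offset x n)%:Z)%R (size F) = F by apply: Wy.
move: W; rewrite {1 2}eF => /window_infix.
rewrite size_takel; last by rewrite /d; lia.
rewrite size_takel; last by rewrite size_drop /d; lia.
have -> : (- (k + offset x n)%:Z + d%:Z = i)%R by rewrite /d; lia.
rewrite -Ew => Ew'.
exists (window x (- n%:Z)%R n.*2.+1), (take d F), (drop (size w) (drop d F)).
split; first by exists x; split=> //; exists (- n%:Z)%R; rewrite size_window.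
by change (F = take d F ++ w ++ drop (size w) (drop d F)); rewrite {1}eF -Ew'.
Qed.

Hypothesis HX : shift_space X.

Lemma lang_morph_image z : lang X z -> lang (imageY X sigma) (mo z).
Proof.
case=> x0 [Xx0 [i E]]; have [x [Xx Ex]] := shift_space_shift HX i Xx0.
set m := size z in E.
have Ez : z = window x 0 m.
  by rewrite {1}E /window; apply: eq_map => k /=; rewrite Ex; congr x0; lia.
exists (image_point x); split; first exact: imageY_image_point.
exists 0%R; have := window_image_point x m.
have -> : central x m = mo (window x (- m%:Z)%R m) ++ mo z ++ sigma (x m%:Z%R).
  rewrite /central (_ : m.*2.+1 = m + (m + 1))%N; last lia.
  rewrite !window_cat !morph_cat window1 morph1 Ez.
  by congr (_ ++ mo (window x _ _) ++ sigma (x _)); lia.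
by move/window_infix; rewrite /offset addNr.
Qed.

End ImagePoints.

Section Antecedents.
Variables (A B : finType) (X : (int -> A) -> Prop) (sigma : A -> seq B) (l : B).
Hypotheses (Hslp : strongly_left_proper sigma l) (Hinj : injective (morph sigma)).
Local Notation mo := (morph sigma).
Local Notation Y := (imageY X sigma).

Lemma lang_image_desubst v p q : lang Y (p ++ mo v ++ l :: q) ->
  exists z1 a b z2, [/\ lang X (rcons z1 a ++ v ++ b :: z2),
    suffix p (mo (rcons z1 a)) & prefix (l :: q) (mo (b :: z2))].
Proof.
case/(lang_image_preimage Hslp) => z [p1 [q1 [Lz Ez]]].
have [e1 /lang_extR [e2 Le]] := lang_extL Lz.
have : mo (rcons (e1 :: z) e2) = (sigma e1 ++ p1 ++ p) ++ mo v ++ l :: (q ++ q1 ++ sigma e2).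
  by rewrite morph_rcons morph_cons Ez -!catA.
case/(morph_synchronize Hslp Hinj) => z1 [z2 [EZ E1 E2]].
case/lastP: z1 EZ E1 => [|z1 a] EZ E1.
  by have [t [Ee1 _]] := image_shape Hslp e1; move: E1; rewrite Ee1.
case: z2 EZ E2 => [//|b z2] EZ E2.
exists z1, a, b, z2; split; first by rewrite -EZ.
  by rewrite E1 !catA suffix_suffix.
by rewrite E2 -cat_cons prefix_prefix.
Qed.

Lemma Eext_image_desubst v s p c d : l \notin s -> l \notin p ->
  Eext Y (s ++ mo v ++ l :: p) c d -> exists a b,
    [/\ Eext X v a b, suffix (c :: s) (sigma a) & prefix (rcons (l :: p) d) (rcons (sigma b) l)].
Proof.
move=> ls lp; rewrite /Eext !rcons_cat rcons_cons -cat_cons.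
case/lang_image_desubst => z1 [a [b [z2 [Lz Hs Hp]]]].
exists a, b; split.
- apply: (@lang_infix _ _ z1 _ z2).
  by rewrite /= !cat_rcons in Lz *.
- have [ta [Ea _]] := image_shape Hslp a.
  by move: Hs; rewrite morph_rcons Ea; apply: suffix_from_notin.
have [tb [Eb _]] := image_shape Hslp b; have [r Er] := morph_cat_head Hslp z2 [::].
have : prefix (rcons (l :: p) d) (mo (b :: z2) ++ [:: l]) by apply: prefix_catl.
by rewrite -catA Er Eb /= eqxx; apply: prefix_upto_notin.
Qed.

End Antecedents.

Section ExtensionGraph.
Variables (A B : finType) (X : (int -> A) -> Prop) (sigma : A -> seq B) (l : B) (v : seq A).
Hypothesis Hslp : strongly_left_proper sigma l.
Local Notation mo := (morph sigma).
Local Notation Y := (imageY X sigma).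
Implicit Types (s p q : seq B) (a b e : A) (c d : B).

(* The map phi_{v,s,p} of the paper: [a] goes to the letter of [sigma a] just before
   its suffix [s], [b] to the letter of [sigma b ++ [:: l]] just after its prefix [p]
   (the default [l] of [nth] is never reached on the vertices of the graph). *)
Definition phiL (s : seq B) (a : A) := nth l (rev (sigma a)) (size s).
Definition phiR (p : seq B) (b : A) := nth l (rcons (sigma b) l) (size p).

Lemma phiL_eq s a c : suffix (c :: s) (sigma a) -> phiL s a = c.
Proof.
rewrite /phiL => /suffixP [r ->]; rewrite rev_cat rev_cons nth_cat size_rcons size_rev ltnSn.
by rewrite nth_rcons size_rev ltnn eqxx.
Qed.

Lemma phiR_eq p b d : prefix (rcons p d) (rcons (sigma b) l) -> phiR p b = d.
Proof.
by rewrite /phiR => /prefixP [r ->]; rewrite nth_cat size_rcons ltnSn nth_rcons ltnn eqxx.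
Qed.

Lemma suffix_image_mem s a : suffix s (sigma a) -> l \in s -> s = sigma a.
Proof.
have [ta [-> lta]] := image_shape Hslp a; case/suffixP => [[|c r] /= Es] ls; first by rewrite Es.
by case: Es lta => _ ->; rewrite mem_cat ls orbT.
Qed.

Lemma proper_suffix_imageE s a :
  suffix s (sigma a) -> proper_suffix s (sigma a) = (l \notin s).
Proof.
move=> Hs; rewrite /proper_suffix Hs; apply/idP/idP; apply: contraNN.
  by move/(suffix_image_mem Hs) ->.
by move/eqP ->; apply: mem_image_first.
Qed.

Lemma prefix_image_shape p b : p != [::] -> prefix p (sigma b) ->
  exists q, p = l :: q /\ l \notin q.
Proof.
have [tb [-> ltb]] := image_shape Hslp b.
case: p => [|c q] //= _ /andP [/eqP -> /prefixP [r Er]]; exists q; split=> //.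
by apply: contraNN ltb; rewrite Er mem_cat => ->.
Qed.

Lemma proper_prefix_image q b : l \notin q ->
  prefix (l :: q) (rcons (sigma b) l) -> proper_prefix (l :: q) (rcons (sigma b) l).
Proof.
move=> lq Hp; rewrite /proper_prefix Hp; apply: contraNneq lq.
by have [tb [-> _]] := image_shape Hslp b; rewrite rcons_cons => -[->]; rewrite mem_rcons mem_head.
Qed.

Lemma phiL_suffix s a : l \notin s -> suffix s (sigma a) -> suffix (phiL s a :: s) (sigma a).
Proof.
move=> ls Hs; have /proper_suffixP [r [c Ea]] : proper_suffix s (sigma a).
  by rewrite proper_suffix_imageE.
have Hc : suffix (c :: s) (sigma a) by rewrite Ea suffix_suffix.
by rewrite (phiL_eq Hc).
Qed.

Lemma phiR_prefix q b : l \notin q -> prefix (l :: q) (rcons (sigma b) l) ->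
  prefix (rcons (l :: q) (phiR (l :: q) b)) (rcons (sigma b) l).
Proof.
move=> lq /(proper_prefix_image lq) /proper_prefixP [d [r Eb]].
have Hd : prefix (rcons (l :: q) d) (rcons (sigma b) l).
  by apply/prefixP; exists r; rewrite cat_rcons.
by rewrite (phiR_eq Hd).
Qed.

Lemma ex_child_m s a : Em X v a -> proper_suffix s (sigma a) ->
  exists s', child_m X sigma v s s' /\ suffix s' (sigma a).
Proof.
move=> Ea Psa.
have [|t [[Tt Pt St] tmin]] :=
  @ex_minimal_size _ (fun t => [/\ Tbm X sigma v t, proper_suffix s t & suffix t (sigma a)]).
  by exists (sigma a); split; [right; exists a | | apply: suffix_refl].
exists t; split=> //; split=> // -[t' [Tt' Pt' /andP [St't t't]]].
have := tmin t' (And3 Tt' Pt' (suffix_trans St't St)).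
by rewrite leqNgt proper_suffix_size //; apply/andP.
Qed.

Lemma ex_child_p p b : Ep X v b -> proper_prefix p (rcons (sigma b) l) ->
  exists q, child_p X sigma l v p q /\ prefix q (rcons (sigma b) l).
Proof.
move=> Eb Ppb.
have [|t [[Tt Pt Pbt] tmin]] := @ex_minimal_size _
    (fun t => [/\ Tbp X sigma l v t, proper_prefix p t & prefix t (rcons (sigma b) l)]).
  by exists (rcons (sigma b) l); split; [right; exists b | | apply: prefix_refl].
exists t; split=> //; split=> // -[t' [Tt' Pt' /andP [Pt't t't]]].
have := tmin t' (And3 Tt' Pt' (prefix_trans Pt't Pbt)).
by rewrite leqNgt proper_prefix_size //; apply/andP.
Qed.

Lemma phiLR_spec s q : l \notin s -> l \notin q ->
  phi_spec X sigma l v s (l :: q) (phiL s) (phiR (l :: q)).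
Proof.
move=> ls lq; split.
- move=> a [b [_ [Ea Hsa] _]].
  have Psa : proper_suffix s (sigma a) by rewrite proper_suffix_imageE.
  by have [s' [Cs' Ss']] := ex_child_m Ea Psa; exists s'.
- move=> s' a [_ /proper_suffixP [r [c ->]] _] [_ Sa] _.
  have Hc : suffix (c :: s) (sigma a) by apply: suffix_trans Sa; apply: suffix_suffix.
  by rewrite (phiL_eq Hc) suffix_suffix.
- move=> b [a [_ _ [Eb Hpb]]].
  by have [q' [Cq' Pq']] := ex_child_p Eb (proper_prefix_image lq Hpb); exists q'.
- move=> q' b [_ /proper_prefixP [d [r ->]] _] [_ Pb] _.
  have Hd : prefix (rcons (l :: q) d) (l :: q ++ d :: r).
    by apply/prefixP; exists r; rewrite cat_rcons.
  by rewrite (phiR_eq (prefix_trans Hd Pb)).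
Qed.

Hypotheses (HX : shift_space X) (Hinj : injective mo).

Lemma Tm_notin s : Tm X sigma v s -> l \notin s.
Proof.
case=> a1 [a2 [a12 [_ [_ ->]]]]; apply: contra a12 => Hl; apply/eqP/(image_inj Hinj).
by rewrite -(suffix_image_mem (lcs_suffixl _ _) Hl) (suffix_image_mem (lcs_suffixr _ _) Hl).
Qed.

Lemma Tp_shape p : Tp X sigma v p -> exists q, p = l :: q /\ l \notin q.
Proof.
case=> b1 [b2 [_ [_ [_ ->]]]]; apply: prefix_image_shape (lcp_prefixl _ _).
have [t1 [-> _]] := image_shape Hslp b1; have [t2 [-> _]] := image_shape Hslp b2.
by rewrite /= eqxx.
Qed.

Lemma Eext_image_phiLR s q a b : l \notin s -> l \notin q ->
  Exy X sigma l v s (l :: q) a b ->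
  Eext Y (s ++ mo v ++ l :: q) (phiL s a) (phiR (l :: q) b).
Proof.
move=> ls lq [Hab [_ Hsa] [_ Hpb]]; have [e Le] := lang_extR Hab.
have /suffixP [r0 Eq] := phiL_suffix ls Hsa; have /prefixP [r Er] := phiR_prefix lq Hpb.
have [te [Ee _]] := image_shape Hslp e.
apply: (@lang_infix _ _ r0 _ (r ++ te)); move: (lang_morph_image Hslp HX Le).
rewrite morph_rcons morph_cons morph_rcons Eq Ee -!catA -[sigma b ++ _]cat_rcons Er.
by rewrite /= !rcons_cat -!catA.
Qed.

Lemma Eext_imageP s q c d : l \notin s -> l \notin q ->
  Eext Y (s ++ mo v ++ l :: q) c d <->
  exists a b, [/\ Exy X sigma l v s (l :: q) a b, phiL s a = c & phiR (l :: q) b = d].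
Proof.
move=> ls lq; split; last by case=> a [b [Hab <- <-]]; apply: Eext_image_phiLR.
case/(Eext_image_desubst Hslp Hinj ls lq) => a [b [Hab Hca Hdb]].
exists a, b; split; [split | exact: phiL_eq | exact: phiR_eq].
- exact: Hab.
- by split; [apply: Eext_Em Hab | apply: suffix_trans (suffix_cons _ _) Hca].
by split; [apply: Eext_Ep Hab | apply: prefix_trans (prefix_rcons _ _) Hdb].
Qed.

Lemma phiLR_image_graph s q : l \notin s -> l \notin q ->
  image_graph X sigma l v s (l :: q) (phiL s) (phiR (l :: q)) (s ++ mo v ++ l :: q).
Proof.
move=> ls lq; have edgeP := Eext_imageP _ _ ls lq; split=> [c|d|//]; split.
- by case/lang_extR => d /edgeP [a [b [Hab <- _]]]; exists a; split=> //; exists b.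
- case=> a [[b Hab] <-]; apply: (@Eext_Em _ _ _ _ (phiR (l :: q) b)).
  by apply/edgeP; exists a, b.
- by case/lang_extL => c /edgeP [a [b [Hab _ <-]]]; exists b; split=> //; exists a.
case=> b [[a Hab] <-]; apply: (@Eext_Ep _ _ _ (phiL s a)).
by apply/edgeP; exists a, b.
Qed.

Lemma lcp_image_rcons b1 b2 : b1 != b2 ->
  lcp (rcons (sigma b1) l) (rcons (sigma b2) l) = lcp (sigma b1) (sigma b2).
Proof.
have [t1 [E1 l1]] := image_shape Hslp b1; have [t2 [E2 l2]] := image_shape Hslp b2.
move=> b12; rewrite E1 E2 /= eqxx lcp_rcons_notin //.
by apply: contra b12 => /eqP t12; apply/eqP/(image_inj Hinj); rewrite E1 E2 t12.
Qed.

Lemma Tm_of_left_special s q c1 c2 : l \notin s -> l \notin q -> c1 != c2 ->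
  Em Y (s ++ mo v ++ l :: q) c1 -> Em Y (s ++ mo v ++ l :: q) c2 -> Tm X sigma v s.
Proof.
move=> ls lq c12.
have anc c : Em Y (s ++ mo v ++ l :: q) c -> exists a, Em X v a /\ suffix (c :: s) (sigma a).
  case/lang_extR => d /(Eext_image_desubst Hslp Hinj ls lq) [a [b [Hab Hca _]]].
  by exists a; split=> //; apply: Eext_Em Hab.
case/anc => a1 [E1 S1] /anc [a2 [E2 S2]]; exists a1, a2; split; last split=> //.
  by apply: contra c12 => /eqP a12; rewrite a12 in S1; rewrite (suffix_cons_inj S1 S2).
by move: S1 S2 => /suffixP [r1 ->] /suffixP [r2 ->]; rewrite lcs_cat_neq.
Qed.

Lemma Tp_of_right_special s q d1 d2 : l \notin s -> l \notin q -> d1 != d2 ->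
  Ep Y (s ++ mo v ++ l :: q) d1 -> Ep Y (s ++ mo v ++ l :: q) d2 -> Tp X sigma v (l :: q).
Proof.
move=> ls lq d12.
have anc d : Ep Y (s ++ mo v ++ l :: q) d ->
    exists b, Ep X v b /\ prefix (rcons (l :: q) d) (rcons (sigma b) l).
  case/lang_extL => c /(Eext_image_desubst Hslp Hinj ls lq) [a [b [Hab _ Hdb]]].
  by exists b; split=> //; apply: Eext_Ep Hab.
case/anc => b1 [E1 P1] /anc [b2 [E2 P2]].
have b12 : b1 != b2.
  by apply: contra d12 => /eqP b12; rewrite b12 in P1; rewrite (prefix_rcons_inj P1 P2).
exists b1, b2; split=> //; split=> //; split=> //.
rewrite -lcp_image_rcons //; move: P1 P2 => /prefixP [r1 ->] /prefixP [r2 ->].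
by rewrite !cat_rcons lcp_cat_neq.
Qed.

End ExtensionGraph.

Section SingletonTrees.
Variables (A B : finType) (X : (int -> A) -> Prop) (sigma : A -> seq B) (l : B).
Variables (v : seq A) (s0 p0 : seq B).
Hypotheses (HX : shift_space X) (Hinj : injective (morph sigma))
  (Hslp : strongly_left_proper sigma l) (Hbis : bispecial X v)
  (HTm : forall s, Tm X sigma v s <-> s = s0) (HTp : forall p, Tp X sigma v p <-> p = p0).
Local Notation mo := (morph sigma).
Local Notation Y := (imageY X sigma).
Local Notation u0 := (s0 ++ mo v ++ p0).

Lemma s0_notin : l \notin s0.
Proof. by have /(Tm_notin Hslp Hinj) := proj2 (HTm s0) erefl. Qed.

Lemma p0_shape : exists p0', p0 = l :: p0' /\ l \notin p0'.
Proof. by have /(Tp_shape Hslp) := proj2 (HTp p0) erefl. Qed.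

Lemma s0_suffix a : Em X v a -> suffix s0 (sigma a).
Proof.
have [_ [a1 [a2 [a12 [E1 E2]]]] _] := Hbis; move=> Ea.
have [a' aa' Ea'] : exists2 a', a != a' & Em X v a'.
  by case: (eqVneq a a1) => [->|aa1]; [exists a2 | exists a1].
have /HTm <- : Tm X sigma v (lcs (sigma a) (sigma a')) by exists a, a'.
exact: lcs_suffixl.
Qed.

Lemma p0_prefix b : Ep X v b -> prefix p0 (sigma b).
Proof.
have [_ _ [b1 [b2 [b12 [E1 E2]]]]] := Hbis; move=> Eb.
have [b' bb' Eb'] : exists2 b', b != b' & Ep X v b'.
  by case: (eqVneq b b1) => [->|bb1]; [exists b2 | exists b1].
have /HTp <- : Tp X sigma v (lcp (sigma b) (sigma b')) by exists b, b'.
exact: lcp_prefixl.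
Qed.

Lemma Exy_s0p0 a b : Eext X v a b -> Exy X sigma l v s0 p0 a b.
Proof.
move=> Hab; have Ea := Eext_Em Hab; have Eb := Eext_Ep Hab.
split=> //; split=> //; first exact: s0_suffix.
exact: prefix_trans (p0_prefix Eb) (prefix_rcons _ _).
Qed.

Lemma phiL_s0_inj a a' : Em X v a -> Em X v a' -> phiL sigma l s0 a = phiL sigma l s0 a' -> a = a'.
Proof.
case: (eqVneq a a') => // aa' Ea Ea' E; exfalso.
have := phiL_suffix Hslp s0_notin (s0_suffix Ea); rewrite E => Sa.
have /(suffix_lcs Sa) := phiL_suffix Hslp s0_notin (s0_suffix Ea').
have /HTm -> : Tm X sigma v (lcs (sigma a) (sigma a')) by exists a, a'.
by move/size_suffix; rewrite ltnn.
Qed.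

Lemma phiR_p0_inj b b' : Ep X v b -> Ep X v b' -> phiR sigma l p0 b = phiR sigma l p0 b' -> b = b'.
Proof.
case: (eqVneq b b') => // bb' Eb Eb' E; exfalso; have [p0' [Ep0 lq0]] := p0_shape.
have Pb b'' : Ep X v b'' -> prefix (l :: p0') (rcons (sigma b'') l).
  by rewrite -Ep0 => /p0_prefix /prefix_trans; apply; apply: prefix_rcons.
have := phiR_prefix Hslp lq0 (Pb _ Eb'); rewrite -Ep0 -E Ep0 => Pb2.
have := prefix_lcp (phiR_prefix Hslp lq0 (Pb _ Eb)) Pb2; rewrite lcp_image_rcons // -Ep0.
have /HTp -> : Tp X sigma v (lcp (sigma b) (sigma b')) by exists b, b'.
by move/size_prefix; rewrite size_rcons ltnn.
Qed.

Lemma leftV_s0p0 a : Em X v a -> leftV X sigma l v s0 p0 a.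
Proof. by case/lang_extR => b /Exy_s0p0 Hab; exists b. Qed.

Lemma rightV_s0p0 b : Ep X v b -> rightV X sigma l v s0 p0 b.
Proof. by case/lang_extL => a /Exy_s0p0 Hab; exists a. Qed.

Lemma phiLR_spec_s0p0 : phi_spec X sigma l v s0 p0 (phiL sigma l s0) (phiR sigma l p0).
Proof. by have [q [-> lq]] := p0_shape; exact: (phiLR_spec X v Hslp s0_notin lq). Qed.

Lemma phiLR_image_graph_s0p0 : image_graph X sigma l v s0 p0 (phiL sigma l s0) (phiR sigma l p0) u0.
Proof. by have [q [-> lq]] := p0_shape; exact: (phiLR_image_graph v Hslp HX Hinj s0_notin lq). Qed.

Lemma ext_image_of_u0 : ext_image_of X sigma v u0.
Proof.
have [_ [a [_ [_ [Ea _]]]] _] := Hbis; have [b Hab] := lang_extR Ea.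
have [_ _ /(_ (phiL sigma l s0 a) (phiR sigma l p0 b)) [_ Hu]] := phiLR_image_graph_s0p0.
split.
  apply: (@lang_infix _ _ [:: phiL sigma l s0 a] _ [:: phiR sigma l p0 b]).
  by rewrite /= cats1; apply: Hu; exists a, b; split=> //; apply: Exy_s0p0.
exists s0, p0; split=> //; exists a, b; split=> //.
- by rewrite (proper_suffix_imageE Hslp) ?s0_notin ?s0_suffix.
- by have [q [-> _]] := p0_shape.
exact: p0_prefix (Eext_Ep Hab).
Qed.

Lemma bispecial_u0 : bispecial Y u0.
Proof.
have [HL HR _] := phiLR_image_graph_s0p0.
have [_ [a1 [a2 [a12 [E1 E2]]]] [b1 [b2 [b12 [F1 F2]]]]] := Hbis.
split; first by case: ext_image_of_u0.
  exists (phiL sigma l s0 a1), (phiL sigma l s0 a2); split.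
    by apply: contra a12 => /eqP /(phiL_s0_inj E1 E2) ->.
  by split; apply/HL; [exists a1 | exists a2]; split=> //; apply: leftV_s0p0.
exists (phiR sigma l p0 b1), (phiR sigma l p0 b2); split.
  by apply: contra b12 => /eqP /(phiR_p0_inj F1 F2) ->.
by split; apply/HR; [exists b1 | exists b2]; split=> //; apply: rightV_s0p0.
Qed.

Lemma phiLR_graph_iso_u0 : graph_iso X sigma l v s0 p0 (phiL sigma l s0) (phiR sigma l p0) u0.
Proof.
have [HL HR HE] := phiLR_image_graph_s0p0.
have Em_leftV a : leftV X sigma l v s0 p0 a -> Em X v a.
  by case=> b [Hab _ _]; apply: Eext_Em Hab.
have Ep_rightV b : rightV X sigma l v s0 p0 b -> Ep X v b.
  by case=> a [Hab _ _]; apply: Eext_Ep Hab.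
split=> // [a1 a2 /Em_leftV E1 /Em_leftV E2|b1 b2 /Ep_rightV F1 /Ep_rightV F2|a b La Rb].
- exact: phiL_s0_inj.
- exact: phiR_p0_inj.
case/HE => a' [b' [Hab' /phiL_s0_inj Ea' /phiR_p0_inj Eb']].
have [Eab' _ _] := Hab'.
by rewrite -(Ea' (Eext_Em Eab') (Em_leftV _ La)) -(Eb' (Eext_Ep Eab') (Ep_rightV _ Rb)).
Qed.

Lemma bispecial_ext_image_eq u :
  ext_image_of X sigma v u -> bispecial Y u -> u = u0.
Proof.
case=> _ [s [p [[a [b [Hab Psa p_nil Ppb]]] ->]]].
case=> _ [c1 [c2 [c12 [C1 C2]]]] [d1 [d2 [d12 [D1 D2]]]].
have ls : l \notin s by case/andP: (Psa) => Ssa _; rewrite -(proper_suffix_imageE Hslp Ssa).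
have [q [Ep lq]] := prefix_image_shape Hslp p_nil Ppb; rewrite Ep in C1 C2 D1 D2 *.
have /HTm -> := Tm_of_left_special Hslp Hinj ls lq c12 C1 C2.
by have /HTp -> := Tp_of_right_special Hslp Hinj ls lq d12 D1 D2.
Qed.

End SingletonTrees.

Theorem proposition4p4 (A B : finType) (X : (int -> A) -> Prop)
    (sigma : A -> seq B) (l : B) (v : seq A) :
  shift_space X ->
  injective (morph sigma) ->
  strongly_left_proper sigma l ->
  bispecial X v ->
  (forall s p, Tm X sigma v s -> Tp X sigma v p -> is_ext_image X sigma v s p ->
     exists phiL phiR : A -> B,
       phi_spec X sigma l v s p phiL phiR /\
       image_graph X sigma l v s p phiL phiR (s ++ morph sigma v ++ p))
  /\
  (forall s0 p0 : seq B,
     (forall s, Tm X sigma v s <-> s = s0) ->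
     (forall p, Tp X sigma v p <-> p = p0) ->
     [/\ ext_image_of X sigma v (s0 ++ morph sigma v ++ p0),
         bispecial (imageY X sigma) (s0 ++ morph sigma v ++ p0),
         (forall u, ext_image_of X sigma v u -> bispecial (imageY X sigma) u ->
            u = s0 ++ morph sigma v ++ p0)
       & exists phiL phiR : A -> B,
           phi_spec X sigma l v s0 p0 phiL phiR /\
           graph_iso X sigma l v s0 p0 phiL phiR (s0 ++ morph sigma v ++ p0)]).
Proof.
move=> HX Hinj Hslp Hbis; split.
  move=> s p HTm HTp _; have ls := Tm_notin Hslp Hinj HTm.
  have [q [-> lq]] := Tp_shape Hslp HTp.
  exists (phiL sigma l s), (phiR sigma l (l :: q)).
  by split; [apply: phiLR_spec | apply: phiLR_image_graph].
move=> s0 p0 HTm HTp; split.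
- exact: ext_image_of_u0.
- exact: bispecial_u0.
- exact: bispecial_ext_image_eq.
exists (phiL sigma l s0), (phiR sigma l p0).
by split; [apply: phiLR_spec_s0p0 | apply: phiLR_graph_iso_u0].
Qed.
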